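(* Let $x,v,g:[0,\infty)\to\mathbb{R}^3$ satisfy \[\dot x=v(t),\qquad \dot v=-a(x,t)v(t)+g(t),\] where the scalar coefficient satisfies $a(x,t)\ge H/(1+|x|^2)^{\beta}$ for some constants $H>0$ and $\beta<1/2$, and $|g(t)|=O((1+t)^{-\eta})$ for some constant $\eta>1$. Then $|v(t)|=O((1+t)^{-(\eta-1)})$, with the order constant depending only on $x(0)$, $v(0)$, $H$, $\beta$ and $\eta$. *)

From HB Require Import structures.
From mathcomp Require Import all_boot all_order all_algebra.
From mathcomp Require Import all_classical all_reals all_analysis.
Set Implicit Arguments. Unset Strict Implicit. Unset Printing Implicit Defensive.
Import Order.TTheory GRing.Theory Num.Theory.
Import numFieldNormedType.Exports.
Local Open Scope ring_scope.

Definition enorm {R : realType} (u : 'rV[R]_3) : R :=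
  Num.sqrt (\sum_(i < 3) (u ord0 i) ^+ 2).

From HB Require Import structures.
From mathcomp Require Import all_boot all_order all_algebra.
From mathcomp Require Import all_classical all_reals all_analysis.
From mathcomp Require Import ring lra.
Import Order.TTheory GRing.Theory Num.Theory.
Import numFieldNormedType.Exports.
Local Open Scope classical_set_scope.
Local Open Scope ring_scope.

Set Implicit Arguments.
Unset Strict Implicit.
Unset Printing Implicit Defensive.

(** Both bounds on the speed come from one comparison principle: if
    [|f 0| < phi 0] and [f . f' < phi phi'] whenever [|f| = phi], then [|f|]
    stays below [phi]; for [f' = -alpha f + g] the contact condition holds as
    soon as [|g| < phi' + alpha phi].  A first comparison, using only
    [alpha >= 0] and the integrability of [(1 + t)^-eta], bounds the speed by a
    constant, so [|x t|] grows at most linearly.  Because [beta < 1/2], the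
    damping [H / (1 + |x|^2)^beta] along the trajectory then decays no faster
    than [(T + t)^(-2 beta)], hence dominates [eta / (T + t)] once [T] is large;
    with this, [phi t = K (T + t)^(1 - eta)] satisfies
    [phi' + alpha phi >= K (T + t)^-eta], which beats [|g|] for [K] large. *)

Section Barrier.
Variable R : realType.

Lemma left_max_derive_ge0 (u : R -> R) (s d : R) :
  (\forall r \near s^'-, u r <= u s) -> is_derive s 1 u d -> 0 <= d.
Proof.
move=> uls [ud <-]; rewrite ['D_1 u s]cvg_at_leftE //.
apply: limr_ge.
  rewrite -(cvg_at_leftE (fun h => h^-1 *: ((u \o shift s) _ - u s))) //.
  apply: cvg_trans ud; apply: cvg_app.
  move=> A [e e0 Ae]; exists e => // x xe x0; apply: Ae => //.
  exact/ltr0_neq0.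
have ulh : \forall h \near 0^'-, u (h + s) <= u s.
  rewrite -nbhs_right_leftP oppr0.
  move: uls; rewrite nbhs_left0P; apply: filterS => e /=.
  by rewrite addrC.
near=> h; apply: mulr_le0.
  by rewrite invr_le0 ltW //; near: h; exact: nbhs_left_lt.
by rewrite subr_le0 [_%:A]mulr1 /=; near: h.
Unshelve. all: by end_near. Qed.

Lemma barrier_lt0 (u du : R -> R) :
  u x @[x --> 0^'+] --> u 0 ->
  (forall t : R, 0 < t -> is_derive t 1 u (du t)) ->
  u 0 < 0 -> (forall t, 0 < t -> u t = 0 -> du t < 0) ->
  forall t, 0 <= t -> u t < 0.
Proof.
move=> u0r ud u0 ucross t t0; rewrite ltNge; apply/negP => ut.
pose A := [set r | 0 <= r <= t /\ 0 <= u r].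
have Alb : has_lbound A by exists 0 => r [/andP[]].
have At : A t by split => //; rewrite t0 lexx.
have An : A !=set0 by exists t.
pose s := inf A.
(* [s] is the first time [u] reaches [0]: below it [u < 0], and [u s = 0]. *)
have s0 : 0 <= s by apply: lb_le_inf => // r [/andP[]].
have st : s <= t by exact: ge_inf.
have below r : 0 <= r -> r < s -> u r < 0.
  move=> r0 rs; rewrite ltNge; apply/negP => ur.
  suff : s <= r by rewrite leNgt rs.
  by apply: ge_inf => //; rewrite /A /= r0 (ltW (lt_le_trans rs st)).
have ucont r : 0 < r -> {for r, continuous u}.
  move=> r0; have [ur _] := ud r r0.
  by apply: differentiable_continuous; apply/derivable1_diffP.
have us_ge0 : 0 <= u s.
  rewrite leNgt; apply/negP => us.
  have usr : u r @[r --> s^'+] --> u s.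
    by have [->|s_gt0] := eqVneq s 0; [|apply/cvg_at_right_filter/ucont; rewrite lt0r s_gt0].
  have [e e0 ule] : exists2 e, 0 < e & forall r, s < r < s + e -> u r < 0.
    have /nbhs_ballP[e e0 He] : \forall r \near s^'+, u r < 0 by exact: cvgr_lt usr _ us.
    exists e => // r /andP[sr rse]; apply: He => //.
    by rewrite /ball /= ltr_distlC (lt_trans _ sr) ?gtrBl.
  have [a Aa ase] := inf_adherent e0 (conj An Alb).
  have sa : s < a.
    rewrite lt_neqAle (ge_inf Alb Aa) andbT; apply/eqP => sa.
    by case: Aa => _; rewrite -sa leNgt us.
  by case: Aa => _; rewrite leNgt ule // sa ase.
have s_gt0 : 0 < s.
  by rewrite lt_neqAle s0 andbT; apply/eqP => s_eq0; move: us_ge0; rewrite -s_eq0 leNgt u0.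
have below_left : \forall r \near s^'-, u r < 0.
  by near=> r; apply: below; near: r; [exact: nbhs_left_ge s_gt0 | exact: nbhs_left_lt].
have us_le0 : u s <= 0.
  rewrite leNgt; apply/negP => us.
  have usl : u r @[r --> s^'-] --> u s by exact/cvg_at_left_filter/ucont.
  near s^'- => r.
  have : 0 < u r by near: r; exact: cvgr_gt usl _ us.
  by rewrite ltNge ltW //; near: r.
have us_eq0 : u s = 0 by apply/eqP; rewrite eq_le us_le0 us_ge0.
have : 0 <= du s.
  apply: left_max_derive_ge0 (ud s s_gt0); rewrite us_eq0.
  by apply: filterS below_left => r /ltW.
by rewrite leNgt ucross.
Unshelve. all: by end_near. Qed.
End Barrier.

Section EuclideanRow.
Variables (R : realType) (n : nat).
Implicit Types u w : 'rV[R]_n.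

Definition euclid_dot u w := \sum_(i < n) u ord0 i * w ord0 i.
Definition euclid_sqnorm u := \sum_(i < n) u ord0 i ^+ 2.
Definition euclid_norm u := Num.sqrt (euclid_sqnorm u).

Lemma euclid_sqnorm_ge0 u : 0 <= euclid_sqnorm u.
Proof. by apply: sumr_ge0 => i _; exact: sqr_ge0. Qed.

Lemma euclid_norm_ge0 u : 0 <= euclid_norm u.
Proof. exact: sqrtr_ge0. Qed.

Lemma sqr_euclid_norm u : euclid_norm u ^+ 2 = euclid_sqnorm u.
Proof. by rewrite sqr_sqrtr // euclid_sqnorm_ge0. Qed.

Lemma euclid_dotZDr u w k :
  euclid_dot u (k *: u + w) = k * euclid_sqnorm u + euclid_dot u w.
Proof.
by rewrite /euclid_dot mulr_sumr -big_split; apply: eq_bigr => i _; rewrite !mxE => /=; ring.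
Qed.

Lemma euclid_norm_eq0 u : euclid_norm u = 0 -> forall i, u ord0 i = 0.
Proof.
move=> /eqP; rewrite sqrtr_eq0 le_eqVlt ltNge euclid_sqnorm_ge0 orbF => /eqP u0 i.
apply/eqP; rewrite -sqrf_eq0; apply/eqP.
by move/psumr_eq0P : u0 => -> // j _; exact: sqr_ge0.
Qed.

Lemma euclid_dot_le u w : euclid_dot u w <= euclid_norm u * euclid_norm w.
Proof.
set A := euclid_norm u; set B := euclid_norm w.
have [A0|A0] := eqVneq A 0.
  by rewrite A0 mul0r /euclid_dot big1 // => i _; rewrite (euclid_norm_eq0 A0) mul0r.
have [B0|B0] := eqVneq B 0.
  by rewrite B0 mulr0 /euclid_dot big1 // => i _; rewrite (euclid_norm_eq0 B0) mulr0.
have AB0 : 0 < A * B by rewrite mulr_gt0 // lt0r ?A0 ?B0 ?euclid_norm_ge0.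
have sum_sq : \sum_(i < n) (u ord0 i * B - w ord0 i * A) ^+ 2
    = 2 * (A * B) * (A * B - euclid_dot u w).
  rewrite (eq_bigr (fun i => B ^+ 2 * u ord0 i ^+ 2 + A ^+ 2 * w ord0 i ^+ 2
      - 2 * (A * B) * (u ord0 i * w ord0 i))) => [|i _]; last by ring.
  rewrite big_split sumrN big_split /= -!mulr_sumr.
  rewrite -[\sum_i u ord0 i ^+ 2]/(euclid_sqnorm u) -[\sum_i w ord0 i ^+ 2]/(euclid_sqnorm w).
  by rewrite -!sqr_euclid_norm -/A -/B /euclid_dot; ring.
have : 0 <= 2 * (A * B) * (A * B - euclid_dot u w).
  by rewrite -sum_sq sumr_ge0 // => i _; exact: sqr_ge0.
by rewrite pmulr_rge0 ?subr_ge0 // mulr_gt0.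
Qed.

Lemma euclid_sqnorm_cvg {T : Type} (F : set_system T) {FF : Filter F}
    (f : T -> 'rV[R]_n) (l : 'rV[R]_n) :
  f x @[x --> F] --> l -> euclid_sqnorm (f x) @[x --> F] --> euclid_sqnorm l.
Proof.
move=> fl; apply: (@cvg_big _ _ +%R 0 xpredT add_continuous) => i _.
have fil : f x ord0 i @[x --> F] --> l ord0 i.
  exact: (continuous_cvg _ (@coord_continuous R 1 n ord0 i l) fl).
by under eq_cvg do rewrite expr2; rewrite expr2; exact: cvgM.
Qed.

Lemma is_derive_coord (f : R -> 'rV[R]_n) (t : R) (df : 'rV[R]_n) i :
  is_derive t 1 f df -> is_derive t 1 (fun s => f s ord0 i) (df ord0 i).
Proof.
move=> [fd dfE]; move: fd; rewrite /derivable /derive in dfE *; rewrite dfE => fdf.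
have coord_dq : (fun h : R => (h^-1 *: ((f \o shift t) (h *: 1) - f t)) ord0 i)
    @ 0^' --> df ord0 i.
  exact: (continuous_cvg _ (@coord_continuous R 1 n ord0 i df) fdf).
have dqE : (fun h : R => (h^-1 *: ((f \o shift t) (h *: 1) - f t)) ord0 i) =
    (fun h => h^-1 *: (((fun s => f s ord0 i) \o shift t) (h *: 1) - f t ord0 i)).
  by apply/funext => h; rewrite !mxE.
by rewrite dqE in coord_dq; split; [exact: cvgP coord_dq | exact: cvg_lim coord_dq].
Qed.

Lemma is_derive_euclid_sqnorm (f : R -> 'rV[R]_n) (t : R) (df : 'rV[R]_n) :
  is_derive t 1 f df ->
  is_derive t 1 (fun s => euclid_sqnorm (f s)) (2 * euclid_dot (f t) df).
Proof.
move=> fd.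
have sqE : (fun s => euclid_sqnorm (f s)) = \sum_(i < n) (fun s => f s ord0 i) ^+ 2.
  by rewrite fct_sumE.
rewrite sqE.
apply: is_derive_eq; first by apply: is_derive_sum => i; apply: is_deriveX; exact: is_derive_coord.
by rewrite /euclid_dot mulr_sumr; apply: eq_bigr => i _; rewrite /= expr1 -[_ *: _]/(_ * _) mulrA.
Qed.

Lemma norm_barrier (f df : R -> 'rV[R]_n) (phi dphi : R -> R) :
  f x @[x --> 0^'+] --> f 0 ->
  (forall t : R, 0 < t -> is_derive t 1 f (df t)) ->
  (forall t : R, 0 <= t -> is_derive t 1 phi (dphi t)) ->
  (forall t : R, 0 <= t -> 0 < phi t) ->
  euclid_norm (f 0) < phi 0 ->
  (forall t : R, 0 < t -> euclid_norm (f t) = phi t ->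
     euclid_dot (f t) (df t) < phi t * dphi t) ->
  forall t : R, 0 <= t -> euclid_norm (f t) < phi t.
Proof.
move=> f0r fd phid phi_gt0 f0 fcross.
pose u := (fun s => euclid_sqnorm (f s)) - phi ^+ 2.
have uE s : u s = euclid_sqnorm (f s) - phi s ^+ 2 by [].
have ltE t : 0 <= t -> (euclid_norm (f t) < phi t) = (u t < 0).
  move=> t0; rewrite uE subr_lt0 -sqr_euclid_norm ltr_pXn2r ?nnegrE ?euclid_norm_ge0 //.
  exact: ltW (phi_gt0 _ t0).
move=> t t0; rewrite ltE //.
apply: (@barrier_lt0 _ u (fun s => 2 * euclid_dot (f s) (df s) - 2 * (phi s * dphi s))) => //.
- apply: cvgB; first exact: euclid_sqnorm_cvg.
  have [phi0 _] := phid 0 (lexx 0).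
  have phi0r : phi x @[x --> 0^'+] --> phi 0.
    by apply/cvg_at_right_filter/differentiable_continuous/derivable1_diffP.
  by under eq_cvg do rewrite expr2; rewrite expr2; exact: cvgM.
- move=> s s0; apply: is_deriveB; first exact: is_derive_euclid_sqnorm (fd s s0).
  apply: is_derive_eq; first exact/is_deriveX/phid/ltW.
  by rewrite /= expr1 -[_ *: _]/(_ * _) mulrA.
- by rewrite -ltE.
- move=> s s0 /eqP; rewrite uE subr_eq0 => /eqP us0.
  rewrite subr_lt0 ltr_pM2l // fcross //.
  apply/eqP; rewrite -(eqrXn2 (_ : 0 < 2)%N) ?euclid_norm_ge0 ?(ltW (phi_gt0 _ (ltW s0))) //.
  by rewrite sqr_euclid_norm us0.
Qed.

Lemma damped_norm_barrier (f g : R -> 'rV[R]_n) (alpha phi dphi : R -> R) :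
  f x @[x --> 0^'+] --> f 0 ->
  (forall t : R, 0 < t -> is_derive t 1 f (- alpha t *: f t + g t)) ->
  (forall t : R, 0 <= t -> is_derive t 1 phi (dphi t)) ->
  (forall t : R, 0 <= t -> 0 < phi t) ->
  euclid_norm (f 0) < phi 0 ->
  (forall t : R, 0 < t -> euclid_norm (g t) < dphi t + alpha t * phi t) ->
  forall t : R, 0 <= t -> euclid_norm (f t) < phi t.
Proof.
move=> f0r fd phid phi_gt0 f0 gbound.
apply: (norm_barrier f0r fd phid phi_gt0 f0) => t t0 ft.
have fg := euclid_dot_le (f t) (g t); rewrite ft in fg.
have := gbound t t0; rewrite -(ltr_pM2l (phi_gt0 t (ltW t0))).
by rewrite euclid_dotZDr -sqr_euclid_norm ft; lra.
Qed.
End EuclideanRow.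

Lemma enormE (R : realType) (u : 'rV[R]_3) : enorm u = euclid_norm u.
Proof. by []. Qed.

Section PowerWeights.
Variable R : realType.

Lemma is_derive_powR_shift (c p t : R) : 0 < c + t ->
  is_derive t 1 (fun s => (c + s) `^ p) (p * (c + t) `^ (p - 1)).
Proof.
move=> ct0; rewrite (_ : (fun s => _) = (fun z : R => z `^ p) \o shift c); last first.
  by apply/funext => s; rewrite /= addrC.
rewrite [c + t]addrC in ct0 *.
by have := is_derive1_comp (g := shift c) (is_derive1_powR p ct0) (is_derive_shift t 1 c); rewrite mulr1.
Qed.

Lemma le0_ger_powR (p a b : R) : p <= 0 -> 0 < a -> a <= b -> b `^ p <= a `^ p.
Proof.
move=> p0 a0 ab; have b0 := lt_le_trans a0 ab.
rewrite -[p]opprK !(powRN _ (- p)) lef_pV2 ?posrE ?powR_gt0 //.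
by apply: ge0_ler_powR; rewrite ?nnegrE ?oppr_ge0 // ltW.
Qed.

Lemma one_add_sqr_powR_le (beta gam L z y : R) :
  beta <= gam -> 0 <= gam -> 1 <= L -> 1 <= z -> 0 <= y <= L * z ->
  (1 + y ^+ 2) `^ beta <= (2 * L ^+ 2) `^ gam * z `^ (2 * gam).
Proof.
move=> bg gam0 L1 z1 /andP[y0 yLz].
have L0 : 0 <= L := le_trans ler01 L1.
have z0 : 0 <= z := le_trans ler01 z1.
apply: (le_trans (ler_powR _ bg)); first by rewrite lerDl sqr_ge0.
rewrite powRrM powR_mulrn // -powRM ?mulr_ge0 ?sqr_ge0 //.
apply: ge0_ler_powR; rewrite ?nnegrE ?addr_ge0 ?mulr_ge0 ?sqr_ge0 //.
have : y ^+ 2 <= (L * z) ^+ 2 by rewrite ler_pXn2r ?nnegrE ?mulr_ge0.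
have : 1 <= (L * z) ^+ 2 by rewrite expr_ge1 ?mulr_ge0 // -[1]mulr1 ler_pM.
rewrite exprMn; lra.
Qed.

Lemma sublinear_damping_bound (H beta eta L : R) :
  0 < H -> beta < 1 / 2 -> 0 <= eta -> 1 <= L ->
  exists2 T : R, 1 <= T & forall z y : R, T <= z -> 0 <= y <= L * z ->
    eta <= H / (1 + y ^+ 2) `^ beta * z.
Proof.
move=> H0 beta_lt eta0 L1.
pose gam := Num.max beta 0; pose B := eta * (2 * L ^+ 2) `^ gam / H.
have gam_half : gam < 1 / 2 by rewrite gt_max beta_lt /= divr_gt0.
have gam_lt : 0 < 1 - 2 * gam by lra.
(* [(1 + y^2)^beta <= (2 L^2)^gam z^(2 gam)], and [T] makes [z^(1 - 2 gam) >= B]. *)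
exists (Num.max 1 (B `^ (1 - 2 * gam)^-1)) => [|z y Tz yLz]; first by rewrite le_max lexx.
have z1 : 1 <= z by apply: le_trans Tz; rewrite le_max lexx.
have z0 : 0 < z by apply: lt_le_trans z1.
have Bz : B <= z `^ (1 - 2 * gam).
  have B0 : 0 <= B := divr_ge0 (mulr_ge0 eta0 (powR_ge0 _ _)) (ltW H0).
  have BT : B `^ (1 - 2 * gam)^-1 <= z by apply: le_trans Tz; rewrite le_max lexx orbT.
  rewrite -[leLHS](powRr1 B0) -[X in _ `^ X](mulVf (lt0r_neq0 gam_lt)) powRrM.
  by apply: ge0_ler_powR; rewrite ?nnegrE ?powR_ge0 ?(ltW gam_lt) ?(ltW z0).
have zE : z = z `^ (2 * gam) * z `^ (1 - 2 * gam).
  by rewrite -powRD ?(gt_eqF z0) ?implybT // addrCA subrr addr0 powRr1 // ltW.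
have bg : beta <= gam by rewrite le_max lexx.
have gam0 : 0 <= gam by rewrite le_max lexx orbT.
have Q := one_add_sqr_powR_le bg gam0 L1 z1 yLz.
rewrite mulrAC ler_pdivlMr; last by apply: powR_gt0; rewrite ltr_pwDl ?sqr_ge0.
apply: (le_trans (ler_wpM2l eta0 Q)).
have -> : eta * ((2 * L ^+ 2) `^ gam * z `^ (2 * gam)) = H * (B * z `^ (2 * gam)).
  by rewrite /B; field; exact: lt0r_neq0.
by rewrite ler_pM2l // [leRHS]zE mulrC ler_pM2l // powR_gt0.
Qed.

Lemma powRN_shift_le (T s p : R) : 1 <= T -> 0 <= s -> 0 <= p ->
  (1 + s) `^ (- p) <= T `^ p * (T + s) `^ (- p).
Proof.
move=> T1 s0 p0; have T0 : 0 < T by apply: lt_le_trans T1.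
have s1 : 0 < 1 + s by rewrite ltr_pwDl.
have le_shift : T + s <= T * (1 + s) by rewrite mulrDr mulr1 lerD2l ler_peMl.
have Tp : T `^ p * T `^ (- p) = 1.
  by rewrite -powRD ?subrr ?powRr0 // (gt_eqF T0) implybT.
rewrite -[leLHS]mul1r -[X in X * _]Tp -mulrA ler_pM2l ?powR_gt0 // -powRM ?(ltW T0) ?(ltW s1) //.
have Ts0 : 0 < T + s by lra.
by apply: le0_ger_powR; rewrite ?oppr_le0.
Qed.
End PowerWeights.

Section DampedMotion.
Variables (R : realType) (n : nat).
Variables (x v g : R -> 'rV[R]_n) (alpha : R -> R).
Hypothesis v_cvg0 : v t @[t --> 0^'+] --> v 0.
Hypothesis v_derive : forall t : R, 0 < t -> is_derive t 1 v (- alpha t *: v t + g t).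

Lemma speed_bounded (C eta : R) : 0 <= C -> 1 < eta ->
  (forall t : R, 0 < t -> 0 <= alpha t) ->
  (forall t : R, 0 < t -> euclid_norm (g t) < C * (1 + t) `^ (- eta)) ->
  forall t : R, 0 <= t -> euclid_norm (v t) < euclid_norm (v 0) + 1 + C / (eta - 1).
Proof.
move=> C0 eta1 alpha0 gC t t0.
pose k := C / (eta - 1).
have k0 : 0 <= k by rewrite divr_ge0 // subr_ge0 ltW.
have pw_le1 s : 0 <= s -> (1 + s) `^ (1 - eta) <= 1.
  move=> s0; rewrite -[leRHS](powRr0 (1 + s)); apply: ler_powR; lra.
rewrite -/k; set M := euclid_norm (v 0) + 1 + k.
have phi_gt0 s : 0 <= s -> 0 < M - k * (1 + s) `^ (1 - eta).
  move=> s0; have := ler_wpM2l k0 (pw_le1 s s0).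
  by rewrite /M mulr1; have := euclid_norm_ge0 (v 0); lra.
apply: (lt_le_trans (damped_norm_barrier (dphi := fun s => C * (1 + s) `^ (- eta))
  v_cvg0 v_derive _ phi_gt0 _ _ t0)).
- move=> s s0; have s1 : 0 < 1 + s by lra.
  have := is_derive_powR_shift (1 - eta) s1 => pd; apply: is_derive_eq.
  rewrite (_ : 1 - eta - 1 = - eta); last by rewrite addrAC subrr add0r.
  rewrite add0r mul1r /k -[_ *: _]/(_ * _) mulrA -mulNr; congr (_ * _).
  by field; rewrite subr_eq0 gt_eqF.
- by rewrite addr0 powR1 mulr1 /M; lra.
- move=> s s0; have := gC s s0.
  by have := mulr_ge0 (alpha0 s s0) (ltW (phi_gt0 s (ltW s0))); lra.
- by have := mulr_ge0 k0 (powR_ge0 (1 + t) (1 - eta)); lra.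
Qed.

Lemma speed_decay_shifted (K T eta : R) : 0 < K -> 0 < T ->
  (forall t : R, 0 < t -> eta <= alpha t * (T + t)) ->
  (forall t : R, 0 < t -> euclid_norm (g t) < K * (T + t) `^ (- eta)) ->
  euclid_norm (v 0) < K * T `^ (1 - eta) ->
  forall t : R, 0 <= t -> euclid_norm (v t) < K * (T + t) `^ (1 - eta).
Proof.
move=> K0 T0 alpha_ge gK v0K.
have Ts0 s : 0 <= s -> 0 < T + s by move=> s0; rewrite ltr_wpDr.
apply: (damped_norm_barrier (dphi := fun s => K * ((1 - eta) * (T + s) `^ (- eta)))
  v_cvg0 v_derive).
- move=> s s0; have := is_derive_powR_shift (1 - eta) (Ts0 s s0) => pd.
  by apply: is_derive_eq; rewrite (_ : 1 - eta - 1 = - eta) // addrAC subrr add0r.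
- by move=> s s0; rewrite mulr_gt0 ?powR_gt0 ?Ts0.
- by rewrite addr0.
- move=> s s0; have Z0 := Ts0 s (ltW s0); have P0 := powR_gt0 (- eta) Z0.
  rewrite powRD; last by rewrite (gt_eqF Z0) implybT.
  rewrite powRr1 ?ltW //.
  have aZ : 0 <= alpha s * (T + s) - eta by rewrite subr_ge0 alpha_ge.
  have := mulr_ge0 (ltW (mulr_gt0 K0 P0)) aZ.
  have := gK s s0; lra.
Qed.

Lemma speed_decay (C T eta : R) : 0 <= C -> 1 <= T -> 1 <= eta ->
  (forall t : R, 0 < t -> eta <= alpha t * (T + t)) ->
  (forall t : R, 0 < t -> euclid_norm (g t) < C * (1 + t) `^ (- eta)) ->
  forall t : R, 0 <= t ->
    euclid_norm (v t) <= (euclid_norm (v 0) + 1 + C) * T `^ eta * (1 + t) `^ (1 - eta).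
Proof.
move=> C0 T1 eta1 alpha_ge gC t t0.
pose V := euclid_norm (v 0) + 1 + C.
have V_gt : euclid_norm (v 0) < V /\ C <= V by rewrite /V; have := euclid_norm_ge0 (v 0); lra.
have T0 : 0 < T by lra.
have K0 : 0 < V * T `^ eta.
  by rewrite mulr_gt0 ?powR_gt0 //; case: V_gt; have := euclid_norm_ge0 (v 0); lra.
apply: (le_trans (ltW (speed_decay_shifted K0 T0 alpha_ge _ _ t0))).
- move=> s s0; apply: (lt_le_trans (gC s s0)).
  apply: (le_trans (ler_wpM2l C0 (powRN_shift_le T1 (ltW s0) (le_trans ler01 eta1)))).
  by rewrite mulrA; apply/ler_wpM2r/ler_wpM2r; rewrite ?powR_ge0 //; case: V_gt.
- rewrite -mulrA -powRD ?(gt_eqF T0) ?implybT // addrCA subrr addr0 powRr1 ?ltW //.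
  by case: V_gt; have := euclid_norm_ge0 (v 0); nra.
- by rewrite ler_pM2l //; apply: le0_ger_powR; lra.
Qed.

Hypothesis x_cvg0 : x t @[t --> 0^'+] --> x 0.
Hypothesis x_derive : forall t : R, 0 < t -> is_derive t 1 x (v t).

Lemma position_bound (M : R) : (forall t : R, 0 < t -> euclid_norm (v t) < M) ->
  forall t : R, 0 <= t -> euclid_norm (x t) < euclid_norm (x 0) + 1 + M * t.
Proof.
move=> vM; have M0 : 0 <= M := le_trans (euclid_norm_ge0 _) (ltW (vM 1 ltr01)).
have phi_gt0 s : 0 <= s -> 0 < euclid_norm (x 0) + 1 + M * s.
  by move=> s0; have := euclid_norm_ge0 (x 0); have := mulr_ge0 M0 s0; lra.
apply: (damped_norm_barrier (alpha := fun _ => 0) (dphi := fun _ => M) x_cvg0 _ _ phi_gt0).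
- by move=> s s0; rewrite oppr0 scale0r add0r; exact: x_derive.
- by move=> s _; apply: is_derive_eq; rewrite add0r mul1r [_%:A]mulr1.
- by rewrite mulr0 addr0; lra.
- by move=> s s0; rewrite mul0r addr0; exact: vM.
Qed.
End DampedMotion.

Theorem lemma4 (R : realType) (H beta eta C : R) (x0 v0 : 'rV[R]_3) :
  0 < H -> beta < 1 / 2 -> 1 < eta ->
  exists K : R,
    forall (x v g : R -> 'rV[R]_3) (a : 'rV[R]_3 -> R -> R),
      {within `[0, +oo[, continuous x} ->
      {within `[0, +oo[, continuous v} ->
      (forall t : R, 0 < t -> is_derive t 1 x (v t)) ->
      (forall t : R, 0 < t -> is_derive t 1 v (- (a (x t) t) *: v t + g t)) ->
      (forall (y : 'rV[R]_3) (t : R), 0 <= t ->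
          H / ((1 + enorm y ^+ 2) `^ beta) <= a y t) ->
      (forall t : R, 0 <= t -> enorm (g t) <= C * (1 + t) `^ (- eta)) ->
      x 0 = x0 -> v 0 = v0 ->
      forall t : R, 0 <= t -> enorm (v t) <= K * (1 + t) `^ (- (eta - 1)).
Proof.
move=> H0 beta_lt eta1.
(* The comparison lemmas need a strict bound on [|g|], hence [C1] instead of [C]. *)
pose C1 := `|C| + 1; pose M := enorm v0 + 1 + C1 / (eta - 1).
have [C1_ge0 C_lt_C1] : 0 <= C1 /\ C < C1.
  by rewrite /C1; have := ler_norm C; have := normr_ge0 C; lra.
pose L := Num.max (enorm x0 + 1) M.
have [XL ML] : enorm x0 + 1 <= L /\ M <= L by split; rewrite le_max lexx ?orbT.
have L1 : 1 <= L by have : 0 <= enorm x0 := euclid_norm_ge0 x0; lra.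
have [T T1 damp] := sublinear_damping_bound H0 beta_lt (ltW (lt_trans ltr01 eta1)) L1.
exists ((enorm v0 + 1 + C1) * T `^ eta).
move=> x v g a /continuous_within_itvcyP[_ x0r] /continuous_within_itvcyP[_ v0r].
move=> xd vd ha hg ex0 ev0 t t0; pose alpha s := a (x s) s.
have alpha_ge0 s : 0 < s -> 0 <= alpha s.
  by move=> s0; apply: le_trans (ha _ _ (ltW s0)); rewrite divr_ge0 ?powR_ge0 ?ltW.
have gC1 s : 0 < s -> enorm (g s) < C1 * (1 + s) `^ (- eta).
  move=> s0; apply: (le_lt_trans (hg s (ltW s0))).
  by rewrite ltr_pM2r // powR_gt0 //; lra.
have vM s : 0 < s -> enorm (v s) < M.
  move=> s0; rewrite /M -ev0.
  exact: (speed_bounded (alpha := alpha) v0r vd C1_ge0 eta1 alpha_ge0 gC1 (ltW s0)).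
have alpha_ge s : 0 < s -> eta <= alpha s * (T + s).
  move=> s0; apply: le_trans (ler_wpM2r _ (ha _ _ (ltW s0))); last by lra.
  apply: damp; first by lra.
  have := position_bound x0r xd vM (ltW s0); rewrite -!enormE ex0 sqrtr_ge0 => xs /=.
  have := ler_wpM2r (ltW s0) ML; have := ler_wpM2l (le_trans ler01 L1) T1; lra.
have := speed_decay (alpha := alpha) v0r vd C1_ge0 T1 (ltW eta1) alpha_ge gC1 t0.
by rewrite -enormE ev0 opprB.
Qed.
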